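(* Let $\mathcal{D}=(D,B,\mu)$ be a blueprint. For any two threshold functions $t_1,t_2:B\to[-1,1]$, $$|\mathsf{Soundness}(\mathcal{D},t_1)-\mathsf{Soundness}(\mathcal{D},t_2)|\le\sum_{b\in B}|t_1(b)-t_2(b)|.$$
   Context: $\Phi$ is the standard normal CDF. For $\rho\in[-1,1]$, $\Gamma_\rho(q_1,q_2)=\Pr[x\le\Phi^{-1}(q_1),\,y\le\Phi^{-1}(q_2)]$ for jointly Gaussian standard normals $x,y$ with correlation $\rho$. A configuration is $\theta=(b_i,b_j,b_{ij})\in[-1,1]^3$ with $-1+|b_i+b_j|\le b_{ij}\le1-|b_i-b_j|$. Its relative pairwise bias is $\rho(\theta)=\frac{b_{ij}-b_ib_j}{\sqrt{(1-b_i^2)(1-b_j^2)}}$ (or $0$ if the denominator is $0$). A blueprint $\mathcal{D}=(D,B,\mu)$: $D$ a finitely supported distribution on configurations, $B$ the set of biases (first two coordinates) appearing in its support, $\mu$ a probability measure on $B$ with $\sum_b\mu(b)b=0$. For a threshold function $t:B\to[-1,1]$, $\mathsf{Soundness}(\mathcal{D},t)=\mathbb{E}_{\theta=(b_i,b_j,b_{ij})\sim D}[\frac{1-t(b_i)}{2}+\frac{1-t(b_j)}{2}-2\Gamma_{\rho(\theta)}(\frac{1-t(b_i)}{2},\frac{1-t(b_j)}{2})]$. *)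

From HB Require Import structures.
From mathcomp Require Import all_boot all_order all_algebra.
From mathcomp Require Import all_classical all_reals all_analysis.
Set Implicit Arguments. Unset Strict Implicit. Unset Printing Implicit Defensive.
Import Order.TTheory GRing.Theory Num.Theory.
Local Open Scope classical_set_scope.
Local Open Scope ring_scope.

Section Defs.
Context {R : realType}.

Definition Phi (x : R) : R := fine (normal_prob 0 1 `]-oo, x]).

(* quantile function Phi^{-1} : [0,1] -> extended reals;
   Phi^{-1}(0) = -oo, Phi^{-1}(1) = +oo, true inverse on (0,1) *)
Definition PhiInv (q : R) : \bar R := ereal_inf [set x%:E | x in [set x | q <= Phi x]].

(* Gamma_rho(q1,q2) = Pr[x <= Phi^{-1} q1, y <= Phi^{-1} q2] where
   (x, y) = (g1, rho g1 + sqrt(1-rho^2) g2), g1 g2 iid N(0,1):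
   the standard jointly Gaussian pair with correlation rho. *)
Definition Gamma (rho q1 q2 : R) : R :=
  fine ((normal_prob 0 1 \x normal_prob 0 1)%E
    [set g : R * R | (g.1%:E <= PhiInv q1)%E /\
       ((rho * g.1 + Num.sqrt (1 - rho ^+ 2) * g.2)%:E <= PhiInv q2)%E]).

Definition config := (R * R * R)%type.
Definition bi (th : config) : R := th.1.1.
Definition bj (th : config) : R := th.1.2.
Definition bij (th : config) : R := th.2.

Definition is_config (th : config) : Prop :=
  [/\ -1 <= bi th <= 1, -1 <= bj th <= 1, -1 <= bij th <= 1,
      -1 + `|bi th + bj th| <= bij th & bij th <= 1 - `|bi th - bj th|].

Definition rel_bias (th : config) : R :=
  let d := Num.sqrt ((1 - bi th ^+ 2) * (1 - bj th ^+ 2)) in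
  if d == 0 then 0 else (bij th - bi th * bj th) / d.

Definition is_fin_distr (supp : seq config) (w : config -> R) : Prop :=
  [/\ uniq supp, (forall th, th \in supp -> 0 < w th)
    & \sum_(th <- supp) w th = 1].

Definition biases (supp : seq config) : seq R :=
  undup (flatten [seq [:: bi th; bj th] | th <- supp]).

Definition is_blueprint (supp : seq config) (w : config -> R) (mu : R -> R) : Prop :=
  [/\ is_fin_distr supp w,
      (forall th, th \in supp -> is_config th),
      (forall b, b \in biases supp -> 0 <= mu b),
      \sum_(b <- biases supp) mu b = 1
    & \sum_(b <- biases supp) mu b * b = 0].

Definition is_threshold (supp : seq config) (t : R -> R) : Prop :=
  forall b, b \in biases supp -> -1 <= t b <= 1.

Definition Soundness (supp : seq config) (w : config -> R) (t : R -> R) : R :=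
  \sum_(th <- supp) w th *
    (let q1 := (1 - t (bi th)) / 2 in let q2 := (1 - t (bj th)) / 2 in
     q1 + q2 - 2 * Gamma (rel_bias th) q1 q2).

End Defs.

(* Soundness averages, over configurations, the disagreement
     q1 + q2 - 2 Gamma_rho(q1, q2) = Pr[exactly one of x <= Phi^-1(q1), y <= Phi^-1(q2)]
   at q = (1 - t)/2. As x and y are standard normal, these two events have
   probabilities q1 and q2 and grow with q, so raising q1 by d raises
   Gamma_rho(q1, q2) by an amount in [0, d], and likewise for q2. The disagreement
   is thus 1-Lipschitz in each argument, and each configuration moves by at most
   (|t1(b_i) - t2(b_i)| + |t1(b_j) - t2(b_j)|) / 2 <= sum_b |t1(b) - t2(b)|.
   That rho x + sqrt(1 - rho^2) z is standard normal follows by Fubini from the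
   symmetry of the joint density; that Pr[x <= Phi^-1(q)] = q, from continuity
   of Phi. *)

From mathcomp Require Import all_boot all_order all_algebra.
From mathcomp Require Import all_classical all_reals all_analysis.
From mathcomp Require Import measurable_realfun ring lra.
Import numFieldNormedType.Exports.
Import Order.TTheory GRing.Theory Num.Theory.
Local Open Scope ring_scope.

Section real_inequalities.
Context {R : realFieldType}.

Lemma sub_double_lipschitz (I : interval R) (f : R -> R) :
  {in I &, forall x y, x <= y -> 0 <= f y - f x <= y - x} ->
  {in I &, forall x y, `|(x - 2 * f x) - (y - 2 * f y)| <= `|x - y|}.
Proof.
move=> f_incr x y xI yI; wlog xy : x y xI yI / x <= y.
  move=> hwlog; have [|/ltW yx] := leP x y; first exact: hwlog.
  by rewrite distrC (distrC x); exact: hwlog.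
have /andP[inc_ge0 inc_le] := f_incr x y xI yI xy.
by rewrite (ler0_norm (x := x - y)) ?subr_le0 // ler_norml; apply/andP; split; lra.
Qed.

Lemma cov_sqr_le (a b c : R) : -1 + `|a + b| <= c -> c <= 1 - `|a - b| ->
  (c - a * b) ^+ 2 <= (1 - a ^+ 2) * (1 - b ^+ 2).
Proof.
move=> c_ge c_le.
have := ler_norm (a + b); have := ler_norm (- (a + b)); rewrite normrN.
have := ler_norm (a - b); have := ler_norm (- (a - b)); rewrite normrN.
move=> amb_le bma_le napb_le apb_le.
have u1 : 0 <= 1 + c - a - b by lra.
have u2 : 0 <= 1 + c + a + b by lra.
have u3 : 0 <= 1 - c - a + b by lra.
have u4 : 0 <= 1 - c + a - b by lra.
(* The gap is the Gram determinant [1 - a^2 - b^2 - c^2 + 2abc], a combination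
   of products of the [u_i]. *)
have -> : (1 - a ^+ 2) * (1 - b ^+ 2) =
    (c - a * b) ^+ 2 + ((1 + c - a - b) * (1 + c + a + b) * (2 * (1 - c))
      + (1 - c - a + b) * (1 - c + a - b) * (2 * (1 + c))) / 4.
  by field.
by rewrite lerDl divr_ge0 // addr_ge0 // !mulr_ge0 //; lra.
Qed.

Lemma dist_half (x y : R) : `|(1 - x) / 2 - (1 - y) / 2| = `|x - y| / 2.
Proof.
have -> : (1 - x) / 2 - (1 - y) / 2 = (y - x) / 2 by field.
by rewrite normrM distrC [`|2^-1|]ger0_norm // invr_ge0.
Qed.

Lemma ler_sum_mem (I : eqType) (s : seq I) (F : I -> R) (i : I) :
  uniq s -> i \in s -> (forall j, 0 <= F j) -> F i <= \sum_(j <- s) F j.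
Proof. by move=> s_uniq i_s F_ge0; rewrite (bigD1_seq i) //= lerDl sumr_ge0. Qed.

Lemma dist_wsum_le (I : eqType) (s : seq I) (w f g : I -> R) (M : R) :
  (forall i, i \in s -> 0 <= w i) -> \sum_(i <- s) w i = 1 ->
  (forall i, i \in s -> `|f i - g i| <= M) ->
  `|\sum_(i <- s) w i * f i - \sum_(i <- s) w i * g i| <= M.
Proof.
move=> w_ge0 w_sum1 fg_le; rewrite -sumrB.
apply: le_trans (ler_norm_sum _ _ _) _.
rewrite -[M]mul1r -w_sum1 big_distrl /= big_seq [leRHS]big_seq.
apply: ler_sum => i i_s; have wi_ge0 := w_ge0 i i_s.
by rewrite -mulrBr normrM ger0_norm // ler_wpM2l // fg_le.
Qed.

End real_inequalities.

Section finite_measure.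
Context {d} {T : measurableType d} {R : realType}.
Local Open Scope classical_set_scope.
Variable mu : {measure set T -> \bar R}.
Hypothesis mu_fin : (mu setT < +oo)%E.

Lemma measure_fin_num (X : set T) : measurable X -> mu X \is a fin_num.
Proof.
move=> mX; rewrite ge0_fin_numE // (le_lt_trans _ mu_fin) //.
by rewrite le_measure ?inE.
Qed.

Lemma fine_measure_le (A A' : set T) : measurable A -> measurable A' ->
  A `<=` A' -> fine (mu A) <= fine (mu A').
Proof.
by move=> mA mA' AA'; rewrite fine_le ?measure_fin_num ?le_measure ?inE.
Qed.

Lemma fine_measureI_increment_le (A A' B : set T) :
  measurable A -> measurable A' -> measurable B -> A `<=` A' ->
  fine (mu (A' `&` B)) - fine (mu (A `&` B)) <= fine (mu A') - fine (mu A).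
Proof.
move=> mA mA' mB AA'.
have fine_splitA X : measurable X ->
    fine (mu X) = fine (mu (X `\` A)) + fine (mu (X `&` A)).
  move=> mX; rewrite (measureDI mu mX mA) fineD // measure_fin_num //.
  - exact: measurableD.
  - exact: measurableI.
have mA'B := measurableI _ _ mA' mB.
rewrite (fine_splitA _ mA'B) (fine_splitA _ mA') setIAC !(setIidr AA') !addrK.
by apply: fine_measure_le; [exact: measurableD.. | move=> x [[]]].
Qed.

End finite_measure.

Section normal_distribution.
Context {R : realType}.
Local Open Scope classical_set_scope.
Local Notation leb := (@lebesgue_measure R).
Local Notation N := (@normal_prob R 0 1).

Lemma integral_indic_mkcond d (T : measurableType d)
    (nu : {measure set T -> \bar R}) (D : set T) (g : T -> R) :
  (\int[nu]_(u in D) (g u)%:E = \int[nu]_u (\1_D u * g u)%:E)%E.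
Proof.
rewrite integral_mkcond; apply: eq_integral => u _.
by rewrite patchE indicE; case: ifP => _; rewrite ?mul1r ?mul0r.
Qed.

Lemma integral_normal_prob (m s : R) (f : R -> \bar R) :
  measurable_fun [set: R] f -> (\int[normal_prob m s]_x `|f x| < +oo)%E ->
  (\int[normal_prob m s]_x f x = \int[leb]_x (f x * (normal_pdf m s x)%:E))%E.
Proof.
move=> mf finf.
rewrite -(Radon_Nikodym_change_of_variables (normal_prob_dominates m s)) //=;
  last by apply/integrableP; split.
apply: ae_eq_integral => //.
- apply: emeasurable_funM => //; apply: (measurable_int leb).
  apply: (integrableS _ _ (@subsetT _ _)) => //=.
  by apply: Radon_Nikodym_integrable; exact: normal_prob_dominates.
- apply: emeasurable_funM => //=; apply/measurableT_comp => //=.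
  by apply/measurable_funTS; exact: measurable_normal_pdf.
- apply: ae_eqe_mul2l => /=.
  rewrite Radon_NikodymE //=; first exact: normal_prob_dominates.
  move=> abs; case: cid => /= h [_ h_int hE].
  apply: integral_ae_eq => //=.
  + by apply/measurableT_comp => //; exact: measurable_normal_pdf.
  + by move=> E _ mE; rewrite -hE.
Qed.

Lemma normal_pdf_affine (m s x : R) : 0 < s ->
  normal_pdf 0 1 ((x - m) / s) / s = normal_pdf m s x.
Proof.
move=> s_gt0; have s_neq0 := lt0r_neq0 s_gt0.
rewrite /normal_pdf (negbTE s_neq0) oner_eq0 /normal_peak /normal_fun.
rewrite mulrAC; congr (_ * _).
  rewrite expr1n mul1r -[s ^+ 2 * pi *+ 2]mulrnAr sqrtrM ?sqr_ge0 //.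
  by rewrite sqrtr_sqr gtr0_norm // invfM mulrC.
by congr expR; rewrite subr0 expr1n; field.
Qed.

Lemma normal_prob_itvNy_affine (m s b : R) : 0 < s ->
  normal_prob m s `]-oo, b] = N `]-oo, (b - m) / s].
Proof.
move=> s_gt0; pose F x := (x - m) / s.
have F'E : F^`()%classic = cst s^-1.
  apply/funext => x; rewrite /F derive1E deriveM // deriveD // derive_cst.
  by rewrite scaler0 add0r derive_id derive_cst addr0 scaler1.
rewrite /normal_prob -/(F b).
rewrite (@increasing_ge0_integration_by_substitutionNy _ F (normal_pdf 0 1) b) //.
- by apply: eq_integral => x _; rewrite F'E /= -normal_pdf_affine.
- by move=> x y _ _ xy; rewrite /F ltr_pM2r ?invr_gt0 // ltrBlDr subrK.
- by rewrite F'E => x _; exact: cvg_cst.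
- by rewrite F'E; exact: is_cvg_cst.
- by rewrite F'E; exact: cvg_cst.
- split => // ; apply: cvg_at_left_filter.
  by apply: cvgM; [apply: cvgB; [exact: cvg_id | exact: cvg_cst] | exact: cvg_cst].
- by apply/gt0_cvgMlNy; [rewrite invr_gt0 | exact: cvg_addrr_Ny].
- exact/continuous_subspaceT/continuous_normal_pdf.
- by move=> x _; exact: normal_pdf_ge0.
Qed.

Lemma normal_prob_itvy_opp (a : R) : N `[a, +oo[ = N `]-oo, - a].
Proof.
rewrite /normal_prob ge0_integration_by_substitutionNy.
- apply: eq_integral => x _; congr EFin.
  by rewrite /= /normal_pdf oner_eq0 /normal_fun !subr0 sqrrN.
- exact/continuous_subspaceT/continuous_normal_pdf.
- by move=> x _; exact: normal_pdf_ge0.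
Qed.

Lemma normal_pdf_center (m s u : R) : s != 0 ->
  normal_pdf m s u = normal_pdf 0 s (u - m).
Proof. by move=> s_neq0; rewrite /normal_pdf (negbTE s_neq0) /normal_fun subr0. Qed.

(* The density of [(x, rho x + s z)] for independent standard normals [x, z];
   it is symmetric when [rho^2 + s^2 = 1], so [rho x + s z] is standard normal. *)
Lemma normal_pdf_joint_sym (rho s x u : R) : 0 < s -> rho ^+ 2 + s ^+ 2 = 1 ->
  normal_pdf (rho * x) s u * normal_pdf 0 1 x =
  normal_pdf (rho * u) s x * normal_pdf 0 1 u.
Proof.
move=> s_gt0 hs.
rewrite /normal_pdf (negbTE (lt0r_neq0 s_gt0)) oner_eq0 /normal_fun.
rewrite mulrACA [RHS]mulrACA -!expRD; congr (_ * expR _).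
have s2E : s ^+ 2 = 1 - rho ^+ 2 by rewrite -hs addrC addKr.
have s2_neq0 : 1 - rho ^+ 2 != 0 by rewrite -s2E sqrf_eq0 lt0r_neq0.
by rewrite s2E; field.
Qed.

Lemma measurable_fun_lincomb (a c : R) :
  measurable_fun [set: R * R] (fun g : R * R => a * g.1 + c * g.2).
Proof.
by apply: measurable_funD; apply: measurable_funM.
Qed.

Lemma xsection_halfplane (rho s b x : R) : 0 < s ->
  xsection [set g : R * R | rho * g.1 + s * g.2 <= b] x =
  `]-oo, (b - rho * x) / s].
Proof.
move=> s_gt0; apply/seteqP; split => u; rewrite /xsection /= inE /= in_itv /=;
  by rewrite ler_pdivlMr //; lra.
Qed.

Lemma integral_normal_pdf_joint (rho s b : R) : 0 < s -> rho ^+ 2 + s ^+ 2 = 1 ->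
  (\int[leb]_x \int[leb]_u
     (\1_`]-oo, b] u * normal_pdf (rho * x) s u * normal_pdf 0 1 x)%:E)%E =
  N `]-oo, b].
Proof.
move=> s_gt0 hs.
pose f (g : R * R) :=
  (\1_`]-oo, b] g.2 * normal_pdf (rho * g.1) s g.2 * normal_pdf 0 1 g.1)%:E.
have mf : measurable_fun [set: R * R] f.
  apply/measurable_EFinP; apply: measurable_funM; first apply: measurable_funM.
  - by apply: measurableT_comp; [exact: measurable_indic | exact: measurable_snd].
  - under eq_fun => g do rewrite normal_pdf_center ?lt0r_neq0 //.
    apply: measurableT_comp; first exact: measurable_normal_pdf.
    by apply: measurable_funB; [|apply: measurable_funM].
  - by apply: measurableT_comp; [exact: measurable_normal_pdf | exact: measurable_fst].
have f_ge0 g : (0 <= f g)%E by rewrite lee_fin !mulr_ge0 ?normal_pdf_ge0.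
rewrite (@fubini_tonelli _ _ _ _ _ leb leb f mf f_ge0) /=.
rewrite /normal_prob integral_indic_mkcond.
apply: eq_integral => u _.
under eq_integral => x _ do
  rewrite /f /= -mulrA normal_pdf_joint_sym // mulrCA mulrC EFinM.
rewrite ge0_integralZl //.
- by rewrite integral_normal_pdf mule1.
- by apply/measurable_EFinP; exact: measurable_normal_pdf.
- by move=> x _; rewrite lee_fin normal_pdf_ge0.
- by rewrite lee_fin mulr_ge0 ?normal_pdf_ge0.
Qed.

Lemma normal_prob_setT : N [set: R] = 1%E.
Proof. by rewrite /normal_prob integral_normal_pdf. Qed.

Lemma normal_prob2_setXT (A : set R) : measurable A ->
  (N \x N)%E (A `*` [set: R]) = N A.
Proof.
move=> mA; rewrite product_measure1E // -[RHS]mule1; congr (_ * _)%E.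
exact: normal_prob_setT.
Qed.

Lemma normal_prob_rotation (rho s b : R) : 0 < s -> rho ^+ 2 + s ^+ 2 = 1 ->
  (N \x N)%E [set g : R * R | rho * g.1 + s * g.2 <= b] = N `]-oo, b].
Proof.
move=> s_gt0 hs; set H := [set g : R * R | _].
have mH : measurable H.
  rewrite (_ : H = setT `&` (fun g => rho * g.1 + s * g.2) @^-1` `]-oo, b]).
    exact: measurable_fun_lincomb.
  by apply/seteqP; split=> g /=; rewrite in_itv /= => //; case.
rewrite /product_measure1 /= integral_normal_prob; last 2 first.
- exact: measurable_fun_xsection.
- apply: (@le_lt_trans _ _ (\int[N]_x (cst 1%E x))%E); last first.
    by rewrite integral_cst //= mul1e probability_setT ltry.
  apply: ge0_le_integral => //=.
  + by apply: measurableT_comp => //; exact: measurable_fun_xsection.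
  + move=> x _; rewrite gee0_abs // probability_le1 //.
    exact: measurable_xsection.
(* The section at [x] has probability [normal_prob (rho * x) s `]-oo, b]]. *)
rewrite -(integral_normal_pdf_joint _ _ b s_gt0 hs); apply: eq_integral => x _.
rewrite xsection_halfplane // -(normal_prob_itvNy_affine (rho * x) _ b s_gt0).
rewrite /normal_prob integral_indic_mkcond -ge0_integralZr //.
- apply/measurable_EFinP; apply: measurable_funM; first exact: measurable_indic.
  exact: measurable_normal_pdf.
- by move=> u _; rewrite lee_fin mulr_ge0 ?normal_pdf_ge0 ?indic_ge0.
- by rewrite lee_fin normal_pdf_ge0.
Qed.

Lemma normal_prob_halfplane (rho s b : R) : 0 <= s -> rho ^+ 2 + s ^+ 2 = 1 ->
  (N \x N)%E [set g : R * R | rho * g.1 + s * g.2 <= b] = N `]-oo, b].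
Proof.
rewrite le_eqVlt => /predU1P[<- | s_gt0] hs; last exact: normal_prob_rotation.
rewrite expr0n addr0 in hs.
have /orP[/eqP-> | /eqP->] : (rho == 1) || (rho == -1) by rewrite -sqrf_eq1 hs.
- rewrite (_ : [set g | _] = `]-oo, b] `*` setT).
    exact: normal_prob2_setXT.
  by apply/seteqP; split => g /=; rewrite in_itv /= mul1r mul0r addr0 => //[] [].
- rewrite (_ : [set g | _] = `[- b, +oo[ `*` setT).
    by rewrite normal_prob2_setXT // normal_prob_itvy_opp opprK.
  apply/seteqP; split => g /=; rewrite in_itv /= andbT mulN1r mul0r addr0 lerNl //.
  by case.
Qed.

End normal_distribution.

Section standard_normal_cdf.
Context {R : realType}.
Local Open Scope classical_set_scope.
Local Notation leb := (@lebesgue_measure R).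
Local Notation N := (@normal_prob R 0 1).

Lemma normal_prob_Phi (x : R) : N `]-oo, x] = (Phi x)%:E.
Proof. by rewrite /Phi fineK // fin_num_measure. Qed.

Lemma Phi_le (x y : R) : x <= y -> Phi x <= Phi y.
Proof.
move=> xy; rewrite -lee_fin -!normal_prob_Phi; apply: le_measure; rewrite ?inE //.
by move=> z /=; rewrite !in_itv /= => /le_trans; apply.
Qed.

Lemma normal_prob_itvoc_le (x y : R) : x <= y ->
  (N `]x, y] <= (normal_peak 1 * (y - x))%:E)%E.
Proof.
move=> xy; apply: (@le_trans _ _ (\int[leb]_(z in `]x, y]) (normal_peak 1)%:E)%E).
  apply: ge0_le_integral => //.
  - by move=> z _; rewrite lee_fin normal_pdf_ge0.
  - by apply/measurable_funTS/measurable_EFinP; exact: measurable_normal_pdf.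
  - by move=> z _; rewrite lee_fin normal_pdf_ub // oner_eq0.
rewrite integral_cst //= lebesgue_measure_itv /= lte_fin.
case: ltP => [_|yx]; first by rewrite -EFinD -EFinM.
by rewrite (@le_anti _ _ x y) ?xy // subrr mulr0 mule0.
Qed.

Lemma Phi_lipschitz (x y : R) : x <= y -> Phi y - Phi x <= normal_peak 1 * (y - x).
Proof.
move=> xy; rewrite lerBlDl -lee_fin EFinD -!normal_prob_Phi.
rewrite (itv_bndbnd_setU (x := BRight x)) ?bnd_simp // measureU //.
  by rewrite leeD2l // normal_prob_itvoc_le.
apply/seteqP; split => z //=; rewrite !in_itv /= => -[zx /andP[xz _]].
by move: (lt_le_trans xz zx); rewrite ltxx.
Qed.

Lemma Phi_shift_le (x e : R) : 0 <= e -> Phi (x + e / normal_peak 1) <= Phi x + e.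
Proof.
move=> e_ge0; have K_gt0 : 0 < normal_peak 1 :> R by rewrite normal_peak_gt0 ?oner_eq0.
set d := e / normal_peak 1.
have -> : e = normal_peak 1 * (x + d - x).
  by rewrite addrC addKr /d mulrC divfK // lt0r_neq0.
by rewrite -lerBlDl Phi_lipschitz // lerDl divr_ge0 // ltW.
Qed.

Lemma exists_Phi_gt (q : R) : q < 1 -> exists x : R, q < Phi x.
Proof.
move=> q_lt1; apply/not_existsP => Phi_le_q.
pose F (n : nat) := `]-oo, n%:R] : set R.
have F_nd : nondecreasing_seq F.
  move=> n m nm; apply/subsetPset => z; rewrite /F /= !in_itv /= => /le_trans.
  by apply; rewrite ler_nat.
have F_cup : \bigcup_n F n = setT.
  apply/seteqP; split => // z _; exists (Num.Def.truncn z).+1 => //=.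
  by rewrite /F /= in_itv /=; exact/ltW/truncnS_gt.
have NF_cvg : (N \o F) n @[n --> \oo] --> 1%E.
  rewrite -normal_prob_setT -F_cup.
  exact: (nondecreasing_cvg_mu (mu := N) (fun _ => measurable_itv _)
    (bigcupT_measurable _ (fun _ => measurable_itv _)) F_nd).
have : (lim ((N \o F) n @[n --> \oo]) <= q%:E)%E.
  apply: lime_le; first by apply/cvg_ex; exists 1%E.
  apply: nearW => n; rewrite /= /F normal_prob_Phi lee_fin.
  by move: (Phi_le_q n%:R) => /negP; rewrite -leNgt.
by rewrite (cvg_lim _ NF_cvg) // lee_fin leNgt q_lt1.
Qed.

Lemma exists_Phi_lt (q : R) : 0 < q -> exists x : R, Phi x < q.
Proof.
move=> q_gt0; apply/not_existsP => q_le_Phi.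
pose F (n : nat) := `]-oo, - n%:R] : set R.
have F_ni : nonincreasing_seq F.
  move=> n m nm; apply/subsetPset => z; rewrite /F /= !in_itv /= => /le_trans.
  by apply; rewrite lerN2 ler_nat.
have F_cap : \bigcap_n F n = set0.
  apply/seteqP; split => // z /= /(_ (Num.Def.truncn (- z)).+1 I).
  rewrite /F /= in_itv /= lerNr => /(lt_le_trans (truncnS_gt (- z))).
  by rewrite ltxx.
have NF_cvg : (N \o F) n @[n --> \oo] --> 0%E.
  rewrite -(measure0 N) -F_cap.
  apply: (nonincreasing_cvg_mu (mu := N) _ (fun _ => measurable_itv _)
    (bigcapT_measurable (fun _ => measurable_itv _)) F_ni).
  by rewrite -ge0_fin_numE // fin_num_measure.
have : (q%:E <= lim ((N \o F) n @[n --> \oo]))%E.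
  apply: lime_ge; first by apply/cvg_ex; exists 0%E.
  apply: nearW => n; rewrite /= /F normal_prob_Phi lee_fin.
  by move: (q_le_Phi (- n%:R)) => /negP; rewrite -leNgt.
by rewrite (cvg_lim _ NF_cvg) // lee_fin leNgt q_gt0.
Qed.

Lemma preimage_EFin_le (a : \bar R) : [set x : R | (x%:E <= a)%E] =
  match a with r%:E => `]-oo, r] | +oo%E => setT | -oo%E => set0 end.
Proof.
case: a => [r||]; apply/seteqP; split => x //=;
  by rewrite ?in_itv /= ?lee_fin ?leey ?leeNy_eq.
Qed.

Lemma measurable_EFin_le (a : \bar R) : measurable [set x : R | (x%:E <= a)%E].
Proof. by rewrite preimage_EFin_le; case: a. Qed.

Lemma PhiInv_le (q q' : R) : q <= q' -> (PhiInv q <= PhiInv q')%E.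
Proof.
move=> qq'; apply: ereal_inf_le_tmp => _ [x q'_le <-].
by exists x => //; rewrite /= (le_trans qq').
Qed.

Lemma PhiInv_le_EFin (q x : R) : q <= Phi x -> (PhiInv q <= x%:E)%E.
Proof. by move=> qx; apply: ereal_inf_lbound; exists x. Qed.

Lemma EFin_le_PhiInv (q m : R) : Phi m < q -> (m%:E <= PhiInv q)%E.
Proof.
move=> Pm_lt; apply: le_ereal_inf_tmp => _ [x /= q_le <-]; rewrite lee_fin leNgt.
by apply/negP => /ltW/Phi_le; lra.
Qed.

Lemma Phi_PhiInv (q c : R) : PhiInv q = c%:E -> Phi c = q.
Proof.
move=> qc; have K_gt0 : 0 < normal_peak 1 :> R by rewrite normal_peak_gt0 ?oner_eq0.
apply/eqP; rewrite eq_le; apply/andP; split; apply/ler_addgt0Pr => e e_gt0;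
  have d_gt0 : 0 < e / normal_peak 1 by rewrite divr_gt0.
- have : Phi (c - e / normal_peak 1) < q.
    by rewrite ltNge; apply/negP => /PhiInv_le_EFin; rewrite qc lee_fin; lra.
  have := Phi_shift_le (c - e / normal_peak 1) e (ltW e_gt0).
  by rewrite subrK; lra.
- have [_ [x /= q_le <-]] : exists2 y, [set x%:E | x in [set x | q <= Phi x]] y &
      (y < PhiInv q + (e / normal_peak 1)%:E)%E.
    by apply: lb_ereal_inf_adherent => //; rewrite -/(PhiInv q) qc.
  rewrite qc -EFinD lte_fin => /ltW/Phi_le.
  by have := Phi_shift_le c e (ltW e_gt0); lra.
Qed.

Lemma normal_prob_le_PhiInv (q : R) : 0 <= q <= 1 ->
  N [set x : R | (x%:E <= PhiInv q)%E] = q%:E.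
Proof.
move=> /andP[q_ge0 q_le1]; rewrite preimage_EFin_le.
case qc: (PhiInv q) => [c||].
- by rewrite normal_prob_Phi (Phi_PhiInv _ _ qc).
- suff -> : q = 1 by exact: normal_prob_setT.
  apply/eqP; rewrite eq_le q_le1 leNgt /=; apply/negP.
  by move=> /exists_Phi_gt[x /ltW/PhiInv_le_EFin]; rewrite qc.
- suff -> : q = 0 by exact: measure0.
  apply/eqP; rewrite eq_le q_ge0 andbT leNgt; apply/negP.
  by move=> /exists_Phi_lt[m /EFin_le_PhiInv]; rewrite qc.
Qed.

End standard_normal_cdf.

Section Gamma_increments.
Context {R : realType}.
Local Open Scope classical_set_scope.
Local Notation N := (@normal_prob R 0 1).
Local Notation P := (N \x N)%E.

Lemma prob_le_ereal_normal d (T : measurableType d) (Q : probability T R)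
    (f : T -> R) :
  (forall b : R, Q (f @^-1` `]-oo, b]) = N `]-oo, b]) ->
  forall a : \bar R, Q [set t | ((f t)%:E <= a)%E] = N [set x : R | (x%:E <= a)%E].
Proof.
move=> Qf a; rewrite -[X in Q X]/(f @^-1` [set x : R | (x%:E <= a)%E]).
rewrite preimage_EFin_le; case: a => [b||] //.
- by rewrite preimage_setT probability_setT normal_prob_setT.
- by rewrite preimage_set0 !measure0.
Qed.

Definition below1 (q : R) : set (R * R) := [set g | (g.1%:E <= PhiInv q)%E].

Definition below2 (rho q : R) : set (R * R) :=
  [set g | ((rho * g.1 + Num.sqrt (1 - rho ^+ 2) * g.2)%:E <= PhiInv q)%E].

Lemma GammaE (rho q1 q2 : R) :
  Gamma rho q1 q2 = fine (P (below1 q1 `&` below2 rho q2)).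
Proof. by []. Qed.

Lemma measurable_below1 (q : R) : measurable (below1 q).
Proof.
rewrite -[below1 q]setTI.
exact: measurable_fst measurableT _ (measurable_EFin_le _).
Qed.

Lemma measurable_below2 (rho q : R) : measurable (below2 rho q).
Proof.
rewrite -[below2 rho q]setTI.
exact: measurable_fun_lincomb measurableT _ (measurable_EFin_le _).
Qed.

Lemma below1_sub (q q' : R) : q <= q' -> below1 q `<=` below1 q'.
Proof. by move=> /PhiInv_le qq' g /le_trans; apply. Qed.

Lemma below2_sub (rho q q' : R) : q <= q' -> below2 rho q `<=` below2 rho q'.
Proof. by move=> /PhiInv_le qq' g /le_trans; apply. Qed.

Lemma prob_below1 (q : R) : 0 <= q <= 1 -> fine (P (below1 q)) = q.
Proof.
move=> q01; rewrite -[RHS]/(fine q%:E) -normal_prob_le_PhiInv //; congr fine.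
rewrite /below1; apply: (@prob_le_ereal_normal _ _ P fst) => b.
rewrite (_ : fst @^-1` _ = `]-oo, b] `*` setT); first exact: normal_prob2_setXT.
by apply/seteqP; split => g //= [].
Qed.

Lemma prob_below2 (rho q : R) : -1 <= rho <= 1 -> 0 <= q <= 1 ->
  fine (P (below2 rho q)) = q.
Proof.
move=> /andP[rho_ge rho_le] q01.
rewrite -[RHS]/(fine q%:E) -normal_prob_le_PhiInv //; congr fine.
rewrite /below2; apply: (@prob_le_ereal_normal _ _ P
  (fun g : R * R => rho * g.1 + Num.sqrt (1 - rho ^+ 2) * g.2)) => b.
rewrite -(@normal_prob_halfplane _ rho (Num.sqrt (1 - rho ^+ 2)) b) //.
have rho2_le1 : rho ^+ 2 <= 1 by nra.
by rewrite sqr_sqrtr ?subr_ge0 // addrC subrK.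
Qed.

Lemma normal_prob2_setT_lty : (P setT < +oo)%E.
Proof. by rewrite -setXTT normal_prob2_setXT // normal_prob_setT ltry. Qed.

Lemma Gamma_increment1 (rho q q' q2 : R) : 0 <= q -> q <= q' -> q' <= 1 ->
  0 <= Gamma rho q' q2 - Gamma rho q q2 <= q' - q.
Proof.
move=> q_ge0 qq' q'_le1.
have q01 : 0 <= q <= 1 by rewrite q_ge0 (le_trans qq').
have q'01 : 0 <= q' <= 1 by rewrite q'_le1 (le_trans q_ge0).
have mq := measurable_below1 q; have mq' := measurable_below1 q'.
have mB := measurable_below2 rho q2.
rewrite !GammaE subr_ge0; apply/andP; split.
  apply: fine_measure_le; [exact: normal_prob2_setT_lty | exact: measurableI.. |].
  exact: setSI (below1_sub _ _ qq').
apply: le_trans (fine_measureI_increment_le _ normal_prob2_setT_lty _ _ _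
  mq mq' mB (below1_sub _ _ qq')) _.
by apply: lerB; rewrite prob_below1.
Qed.

Lemma Gamma_increment2 (rho q1 q q' : R) : -1 <= rho <= 1 ->
  0 <= q -> q <= q' -> q' <= 1 ->
  0 <= Gamma rho q1 q' - Gamma rho q1 q <= q' - q.
Proof.
move=> rho_bd q_ge0 qq' q'_le1.
have q01 : 0 <= q <= 1 by rewrite q_ge0 (le_trans qq').
have q'01 : 0 <= q' <= 1 by rewrite q'_le1 (le_trans q_ge0).
have mq := measurable_below2 rho q; have mq' := measurable_below2 rho q'.
have mB := measurable_below1 q1.
rewrite !GammaE !(setIC (below1 q1)) subr_ge0; apply/andP; split.
  apply: fine_measure_le; [exact: normal_prob2_setT_lty | exact: measurableI.. |].
  exact: setSI (below2_sub _ _ _ qq').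
apply: le_trans (fine_measureI_increment_le _ normal_prob2_setT_lty _ _ _
  mq mq' mB (below2_sub _ _ _ qq')) _.
by apply: lerB; rewrite prob_below2.
Qed.

End Gamma_increments.

Section soundness.
Context {R : realType}.

Definition disagreement (rho q1 q2 : R) := q1 + q2 - 2 * Gamma rho q1 q2.

Lemma disagreement_lipschitz (rho q1 q1' q2 q2' : R) : -1 <= rho <= 1 ->
  q1 \in `[0, 1] -> q1' \in `[0, 1] -> q2 \in `[0, 1] -> q2' \in `[0, 1] ->
  `|disagreement rho q1 q2 - disagreement rho q1' q2'| <= `|q1 - q1'| + `|q2 - q2'|.
Proof.
move=> rho_bd q1_01 q1'_01 q2_01 q2'_01.
have Gamma_incr1 : {in `[0, 1] &, forall x y, x <= y ->
    0 <= Gamma rho y q2 - Gamma rho x q2 <= y - x}.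
  move=> x y; rewrite !inE /= => /andP[x_ge0 _] /andP[_ y_le1] xy.
  exact: Gamma_increment1.
have Gamma_incr2 : {in `[0, 1] &, forall x y, x <= y ->
    0 <= Gamma rho q1' y - Gamma rho q1' x <= y - x}.
  move=> x y; rewrite !inE /= => /andP[x_ge0 _] /andP[_ y_le1] xy.
  exact: Gamma_increment2.
have lip1 : `|disagreement rho q1 q2 - disagreement rho q1' q2| <= `|q1 - q1'|.
  move: (sub_double_lipschitz _ _ Gamma_incr1 _ _ q1_01 q1'_01).
  rewrite /disagreement; move: (Gamma rho q1 q2) (Gamma rho q1' q2) => G G'.
  by rewrite (_ : q1 + q2 - 2 * G - _ = q1 - 2 * G - (q1' - 2 * G')) //; ring.
have lip2 : `|disagreement rho q1' q2 - disagreement rho q1' q2'| <= `|q2 - q2'|.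
  move: (sub_double_lipschitz _ _ Gamma_incr2 _ _ q2_01 q2'_01).
  rewrite /disagreement; move: (Gamma rho q1' q2) (Gamma rho q1' q2') => G G'.
  by rewrite (_ : q1' + q2 - 2 * G - _ = q2 - 2 * G - (q2' - 2 * G')) //; ring.
exact: le_trans (ler_distD (disagreement rho q1' q2) _ _) (lerD lip1 lip2).
Qed.

Lemma SoundnessE (supp : seq config) (w : config -> R) (t : R -> R) :
  Soundness supp w t = \sum_(th <- supp)
    w th * disagreement (rel_bias th) ((1 - t (bi th)) / 2) ((1 - t (bj th)) / 2).
Proof. by []. Qed.

Lemma rel_bias_bound (th : @config R) : is_config th -> -1 <= rel_bias th <= 1.
Proof.
case=> _ _ _ c_ge c_le; rewrite /rel_bias; case: ifPn => [_|d_neq0].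
  by rewrite lerN10 ler01.
have cov_le := cov_sqr_le _ _ _ c_ge c_le.
have p_ge0 := le_trans (sqr_ge0 _) cov_le.
have d_gt0 : 0 < Num.sqrt ((1 - bi th ^+ 2) * (1 - bj th ^+ 2)).
  by rewrite lt_neqAle eq_sym d_neq0 sqrtr_ge0.
rewrite -ler_norml normrM normfV (gtr0_norm d_gt0) ler_pdivrMr // mul1r.
by rewrite -sqrtr_sqr ler_sqrt.
Qed.

Lemma mem_biases (supp : seq (@config R)) (th : config) : th \in supp ->
  (bi th \in biases supp) && (bj th \in biases supp).
Proof.
move=> th_supp; rewrite /biases !mem_undup; apply/andP; split; apply/flattenP;
  exists [:: bi th; bj th]; rewrite ?inE ?eqxx ?orbT //; by apply/mapP; exists th.
Qed.

Lemma threshold_quantile_itv (t : R) : -1 <= t <= 1 -> (1 - t) / 2 \in `[0, 1].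
Proof. by rewrite in_itv /= => /andP[? ?]; apply/andP; split; lra. Qed.

End soundness.

Theorem lemma2p15 (R : realType) (supp : seq (@config R)) (w : @config R -> R)
  (mu : R -> R) (t1 t2 : R -> R) :
  is_blueprint supp w mu ->
  is_threshold supp t1 -> is_threshold supp t2 ->
  `|Soundness supp w t1 - Soundness supp w t2|
    <= \sum_(b <- biases supp) `|t1 b - t2 b|.
Proof.
case=> [[_ w_gt0 w_sum1] supp_config _ _ _] t1_thr t2_thr.
set M := \sum_(b <- biases supp) `|t1 b - t2 b|.
have dt_le b : b \in biases supp -> `|t1 b - t2 b| <= M.
  move=> b_B; apply: (ler_sum_mem _ _ (fun b => `|t1 b - t2 b|)) => //.
  exact: undup_uniq.
rewrite !SoundnessE; apply: dist_wsum_le => [th /w_gt0/ltW // | // | th th_supp].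
have /andP[bi_B bj_B] := mem_biases _ _ th_supp.
have rho_bd := rel_bias_bound _ (supp_config _ th_supp).
apply: le_trans (disagreement_lipschitz _ _ _ _ _ rho_bd _ _ _ _) _;
  rewrite ?threshold_quantile_itv ?t1_thr ?t2_thr //.
rewrite !dist_half.
by have := dt_le _ bi_B; have := dt_le _ bj_B; lra.
Qed.
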